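(* Let $n>m\geq 0$ be integers and $\gamma$ a real number, and let $G^{\gamma}_{mn}$ be Budak's function. Then for all real $\omega$, $$|G^{\gamma}_{mn}(j\omega)|^2=\left[\frac{(2n)!}{(2m)!}\right]^2\frac{m!}{n!}\cdot\frac{\sum_{i=0}^{m}\binom{m}{i}\frac{(2i)!}{i!}(m+i)!\,[2(\gamma-1)\omega]^{2(m-i)}}{\sum_{k=0}^{n}\binom{n}{k}\frac{(2k)!}{k!}(n+k)!\,(2\gamma\omega)^{2(n-k)}}.$$
   Context: Generalized Bessel polynomials: $B_n(s,\alpha,\beta)=\sum_{k=0}^{n}\binom{n}{k}\frac{(n+k+\alpha-2)^{(k)}}{\beta^k}s^{n-k}$, with $(q)^{(k)}=q(q-1)\cdots(q-k+1)$, $(q)^{(0)}=1$; in particular $B_n(s,2,1)=\sum_{k=0}^n\binom{n}{k}\frac{(n+k)!}{n!}s^{n-k}$. Budak's function is $$G^{\gamma}_{mn}(s)=K\,\frac{B_m(2(\gamma-1)s,2,1)}{B_n(2\gamma s,2,1)},\qquad K=\frac{B_n(0,2,1)}{B_m(0,2,1)},$$ so that $G^{\gamma}_{mn}(0)=1$. *)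

(* complex numbers are modelled by an arbitrary
   numClosedFieldType C (e.g. algC); "real" means x \is Num.real. *)
From HB Require Import structures.
From mathcomp Require Import all_boot all_order all_algebra.
Set Implicit Arguments. Unset Strict Implicit. Unset Printing Implicit Defensive.
Import Order.TTheory GRing.Theory Num.Theory.
Local Open Scope ring_scope.

Definition ffact {R : pzRingType} (q : R) (k : nat) : R :=
  \prod_(i < k) (q - i%:R).

Definition besselB {R : fieldType} (n : nat) (s alpha beta : R) : R :=
  \sum_(k < n.+1) 'C(n, k)%:R * (ffact (n%:R + k%:R + alpha - 2%:R) k / beta ^+ k)
                  * s ^+ (n - k).

Definition budakG {R : fieldType} (gamma : R) (m n : nat) (s : R) : R :=
  (besselB n 0 2%:R 1 / besselB m 0 2%:R 1)
  * (besselB m (2%:R * (gamma - 1) * s) 2%:R 1 / besselB n (2%:R * gamma * s) 2%:R 1).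

From HB Require Import structures.
From mathcomp Require Import all_boot all_order all_algebra.
From mathcomp Require Import ring zify.
Import Order.TTheory GRing.Theory Num.Theory.
Set Implicit Arguments. Unset Strict Implicit. Unset Printing Implicit Defensive.
Local Open Scope ring_scope.

(* B_n(s, 2, 1) is a rescaled reverse Bessel polynomial: its coefficient of
   s^j is (j + 2k)! / (k! j!) with n = j + k, and it satisfies the three-term
   recurrence B_(n+2) = 2 (2n + 3) B_(n+1) + s^2 B_n.  Its coefficients are
   real, so |B_n(i a)|^2 = B_n(i a) B_n(-i a), and B_n(s) B_n(-s) = Q_n(-s^2)
   for the explicit polynomial Q_n whose values n! Q_n(a^2) are the sums of the
   statement.  The product identity is proved by induction on n using the
   recurrence; to close the induction one carries along the cross term
   B_(n+1)(s) B_n(-s) + B_n(s) B_(n+1)(-s) = 4 Q'_(n+1)(-s^2). *)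

Ltac natr_neq0 :=
  rewrite ?andbT; repeat (apply/andP; split);
  rewrite -?(natrD, natrM, natrX) ?nat1r pnatr_eq0 -?lt0n
          ?(muln_gt0, expn_gt0, fact_gt0) //; lia.

Lemma ffact_natr (R : pzRingType) (m k : nat) :
  (k <= m)%N -> ffact (m%:R : R) k = (m ^_ k)%:R.
Proof.
move=> le_km; rewrite ffact_prod natr_prod; apply: eq_bigr => i _.
by rewrite natrB // ltnW // (leq_trans (ltn_ord i)).
Qed.

Lemma coef_X_deriv (R : nzRingType) (p : {poly R}) j : ('X * p^`())`_j = p`_j *+ j.
Proof. by rewrite coefXM coef_deriv; case: j => [|j] //=; rewrite mulr0n. Qed.

Section BesselPolynomials.
Context {R : numFieldType}.

Definition bessel_coef (j k : nat) : R := (j + 2 * k)`!%:R / (k`!%:R * j`!%:R).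

Definition bessel_poly (n : nat) : {poly R} := \poly_(i < n.+1) bessel_coef i (n - i).

Lemma coef_bessel_poly n i :
  (bessel_poly n)`_i = if (i <= n)%N then bessel_coef i (n - i) else 0.
Proof. by rewrite coef_poly ltnS. Qed.

Lemma bessel_coef0 j : bessel_coef j 0 = 1.
Proof. by rewrite /bessel_coef addn0 fact0 mul1r divff //; natr_neq0. Qed.

Lemma bessel_coefSr j k :
  bessel_coef j k.+1 = (2 * (2 * (j + k) + 1))%:R * bessel_coef j k
                       + (if j is j'.+2 then bessel_coef j' k.+1 else 0).
Proof.
have twoS i : (i + 2 * k.+1 = (i + 2 * k).+2)%N by lia.
have SSl i : (i.+2 + 2 * k = (i + 2 * k).+2)%N by lia.
rewrite /bessel_coef; case: j => [|[|j]]; rewrite ?(@addr0 R) !twoS ?SSl !factS;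
  field; natr_neq0.
Qed.

Lemma bessel_poly_rec n :
  bessel_poly n.+2 = (2 * (2 * n + 3))%:R *: bessel_poly n.+1 + 'X^2 * bessel_poly n.
Proof.
apply/polyP => i; rewrite coefD coefZ coefXnM !coef_bessel_poly.
have [le_in1|lt_n1i] := leqP i n.+1.
  rewrite leqW // subSn // bessel_coefSr.
  have -> : (2 * (i + (n.+1 - i)) + 1 = 2 * n + 3)%N by lia.
  congr (_ + _); case: i le_in1 => [|[|j]] //= le_jn.
  by rewrite !subSS subn0 ifT; [congr bessel_coef|]; lia.
rewrite mulr0 add0r; have [->|ne] := eqVneq i n.+2.
  by rewrite leqnn subnn bessel_coef0 /= !subSS subn0 leqnn subnn bessel_coef0.
by rewrite !ifF //; lia.
Qed.

Lemma bessel_poly0 : bessel_poly 0 = 1.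
Proof.
apply/polyP => i; rewrite coef_bessel_poly coef1.
by case: i => [|i] //=; rewrite bessel_coef0.
Qed.

Lemma bessel_poly1 : bessel_poly 1 = 'X + 2%:P.
Proof.
apply/polyP => i; rewrite coef_bessel_poly coefD coefX coefC.
case: i => [|[|i]] /=; rewrite ?bessel_coef0 ?addr0 ?add0r //.
by rewrite subn0 bessel_coefSr bessel_coef0 addr0 mulr1.
Qed.

Lemma besselB_bessel_poly n (s : R) : besselB n s 2%:R 1 = (bessel_poly n).[s].
Proof.
rewrite /besselB horner_poly [RHS](reindex_inj rev_ord_inj) /=.
apply: eq_bigr => k _; rewrite subSS expr1n divr1; congr (_ * _).
have le_kn : (k <= n)%N by rewrite -ltnS.
rewrite addrK -natrD ffact_natr ?leq_addl // -natrM /bessel_coef.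
have -> : (n - (n - k) = k)%N by lia.
have -> : (n - k + 2 * k = n + k)%N by lia.
apply: (canRL (mulfK _)); first by natr_neq0.
rewrite -!natrM; congr _%:R.
have := ffact_fact (leq_addl n k); rewrite addnK => <-.
by rewrite -(bin_fact le_kn); ring.
Qed.

Lemma horner0_bessel_poly n : (bessel_poly n).[0] = (2 * n)`!%:R / n`!%:R.
Proof.
by rewrite horner_coef0 coef_bessel_poly /bessel_coef subn0 add0n fact0 mulr1.
Qed.

Definition bessel_norm_coef (j k : nat) : R :=
  (2 * k)`!%:R * (j + 2 * k)`!%:R / (k`!%:R ^+ 2 * j`!%:R).

Definition bessel_norm_poly (n : nat) : {poly R} :=
  \poly_(i < n.+1) bessel_norm_coef i (n - i).

Lemma coef_bessel_norm_poly n i :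
  (bessel_norm_poly n)`_i = if (i <= n)%N then bessel_norm_coef i (n - i) else 0.
Proof. by rewrite coef_poly ltnS. Qed.

Lemma bessel_norm_coef0 j : bessel_norm_coef j 0 = 1.
Proof. by rewrite /bessel_norm_coef addn0 fact0 mul1r expr1n mul1r divff //; natr_neq0. Qed.

Lemma bessel_norm_coefSl j k :
  j.+1%:R * bessel_norm_coef j.+1 k = (j + 2 * k).+1%:R * bessel_norm_coef j k.
Proof. by rewrite /bessel_norm_coef addSn !factS; field; natr_neq0. Qed.

Lemma bessel_norm_coefSr j k :
  bessel_norm_coef j k.+1 =
    (2 * (2 * (j + k) + 1) * (2 * (2 * k + 1)))%:R * bessel_norm_coef j k
    + (if j is j'.+2 then bessel_norm_coef j' k.+1 else 0).
Proof.
have twoS i : (i + 2 * k.+1 = (i + 2 * k).+2)%N by lia.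
have SSl i : (i.+2 + 2 * k = (i + 2 * k).+2)%N by lia.
have twoSk : (2 * k.+1 = (2 * k).+2)%N by lia.
rewrite /bessel_norm_coef; case: j => [|[|j]];
  rewrite ?(@addr0 R) !twoS ?SSl twoSk !factS; field; natr_neq0.
Qed.

Lemma bessel_norm_poly_deriv n :
  (bessel_norm_poly n.+2)^`() =
    (2 * n + 3)%:R *: bessel_norm_poly n.+1 - 'X * (bessel_norm_poly n.+1)^`().
Proof.
apply/polyP => j; rewrite coefB coefZ coef_X_deriv coef_deriv !coef_bessel_norm_poly.
have [le_jn1|lt_n1j] := leqP j n.+1; last by rewrite ifF ?mul0rn ?mulr0 ?subrr //; lia.
rewrite ifT // subSS -[_ *+ j.+1]mulr_natl -[_ *+ j]mulr_natl bessel_norm_coefSl.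
rewrite -mulrBl -natrB; last lia.
by congr (_%:R * bessel_norm_coef _ _); lia.
Qed.

Lemma bessel_norm_poly_rec n :
  bessel_norm_poly n.+2 =
    ((2 * (2 * n + 3)) ^ 2)%:R *: bessel_norm_poly n.+1
    - (4 * (2 * (2 * n + 3)))%:R *: ('X * (bessel_norm_poly n.+1)^`())
    + 'X^2 * bessel_norm_poly n.
Proof.
apply/polyP => i.
rewrite coefD coefB !coefZ coef_X_deriv coefXnM !coef_bessel_norm_poly.
have [le_in1|lt_n1i] := leqP i n.+1.
  rewrite leqW // subSn // bessel_norm_coefSr.
  rewrite -[_ *+ i]mulr_natl [_ * (i%:R * _)]mulrA -natrM -mulrBl -natrB; last nia.
  congr (_%:R * _ + _); first nia.
  case: i le_in1 => [|[|j]] //= le_jn.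
  by rewrite !subSS subn0 ifT; [congr bessel_norm_coef|]; lia.
rewrite mul0rn !mulr0 subrr add0r; have [->|ne] := eqVneq i n.+2.
  by rewrite leqnn subnn bessel_norm_coef0 /= !subSS subn0 leqnn subnn bessel_norm_coef0.
by rewrite !ifF //; lia.
Qed.

Lemma bessel_norm_poly0 : bessel_norm_poly 0 = 1.
Proof.
apply/polyP => i; rewrite coef_bessel_norm_poly coef1.
by case: i => [|i] //=; rewrite bessel_norm_coef0.
Qed.

Lemma bessel_norm_poly1 : bessel_norm_poly 1 = 'X + 4%:P.
Proof.
apply/polyP => i; rewrite coef_bessel_norm_poly coefD coefX coefC.
case: i => [|[|i]] /=; rewrite ?bessel_norm_coef0 ?addr0 ?add0r //.
by rewrite subn0 bessel_norm_coefSr bessel_norm_coef0 addr0 mulr1.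
Qed.

Lemma bessel_norm_poly_sum m (a : R) :
  \sum_(i < m.+1) 'C(m, i)%:R * ((2 * i)`!%:R / i`!%:R) * (m + i)`!%:R
                  * a ^+ (2 * (m - i))
  = m`!%:R * (bessel_norm_poly m).[a ^+ 2].
Proof.
rewrite horner_poly [in RHS](reindex_inj rev_ord_inj) /= mulr_sumr.
apply: eq_bigr => k _; rewrite subSS -exprM.
have le_km : (k <= m)%N by rewrite -ltnS.
rewrite /bessel_norm_coef.
have -> : (m - k + 2 * (m - (m - k)) = m + k)%N by lia.
have -> : (m - (m - k) = k)%N by lia.
rewrite -(bin_fact le_km) !natrM; field; natr_neq0.
Qed.

Section ProductWithReflection.
Variable s : R.
Let u n := (bessel_poly n).[s].
Let v n := (bessel_poly n).[- s].
Let y := - s ^+ 2.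

Lemma bessel_poly_mulN_invariant n :
  [/\ u n * v n = (bessel_norm_poly n).[y],
      u n.+1 * v n.+1 = (bessel_norm_poly n.+1).[y]
    & u n.+1 * v n + u n * v n.+1 = 4 * ((bessel_norm_poly n.+1)^`()).[y]].
Proof.
elim: n => [|n [IH0 IH1 IH2]].
  rewrite /u /v bessel_poly0 bessel_poly1 bessel_norm_poly0 bessel_norm_poly1.
  by rewrite derivD derivX derivC addr0 !(hornerD, hornerX, hornerC) /y; split; ring.
have u_rec : u n.+2 = (2 * (2 * n + 3))%:R * u n.+1 + s ^+ 2 * u n.
  by rewrite /u bessel_poly_rec !(hornerD, hornerZ, hornerM, hornerX) expr2.
have v_rec : v n.+2 = (2 * (2 * n + 3))%:R * v n.+1 + s ^+ 2 * v n.
  by rewrite /v bessel_poly_rec !(hornerD, hornerZ, hornerM, hornerX) mulrNN expr2.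
have cross : ((bessel_norm_poly n.+1)^`()).[y] = (u n.+1 * v n + u n * v n.+1) / 4.
  by rewrite IH2; field.
split=> //.
  rewrite bessel_norm_poly_rec !(hornerD, hornerN, hornerZ, hornerM, hornerX, hornerXn).
  by rewrite cross -IH0 -IH1 u_rec v_rec /y; field.
rewrite bessel_norm_poly_deriv !(hornerD, hornerN, hornerZ, hornerM, hornerX).
by rewrite cross -IH1 u_rec v_rec /y; field.
Qed.
End ProductWithReflection.

Lemma bessel_poly_mulN (s : R) n :
  (bessel_poly n).[s] * (bessel_poly n).[- s] = (bessel_norm_poly n).[- s ^+ 2].
Proof. by case: (bessel_poly_mulN_invariant s n). Qed.

End BesselPolynomials.

Lemma map_poly_conjC_bessel_poly (C : numClosedFieldType) n :
  map_poly Num.conj (bessel_poly n : {poly C}) = bessel_poly n.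
Proof.
apply/polyP => i; rewrite coef_map /= coef_bessel_poly; case: ifP => _.
  by rewrite /bessel_coef fmorph_div rmorphM /= !conjC_nat.
exact: rmorph0.
Qed.

Lemma normCK_bessel_poly (C : numClosedFieldType) n (a : C) : a \is Num.real ->
  `|(bessel_poly n).['i * a]| ^+ 2 = (bessel_norm_poly n).[a ^+ 2].
Proof.
move=> a_real; rewrite normCK -horner_map map_poly_conjC_bessel_poly.
rewrite rmorphM /= conjCi conj_Creal // mulNr bessel_poly_mulN.
by rewrite exprMn sqrCi mulN1r opprK.
Qed.

Theorem mainTheorem6 (C : numClosedFieldType) (m n : nat) (gamma omega : C) :
  (m < n)%N -> gamma \is Num.real -> omega \is Num.real ->
  `|budakG gamma m n ('i * omega)| ^+ 2 =
    ((2 * n)`!%:R / (2 * m)`!%:R) ^+ 2 * (m`!%:R / n`!%:R) *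
    ((\sum_(i < m.+1) 'C(m, i)%:R * ((2 * i)`!%:R / i`!%:R) * (m + i)`!%:R
                        * (2%:R * (gamma - 1) * omega) ^+ (2 * (m - i)))
     / (\sum_(k < n.+1) 'C(n, k)%:R * ((2 * k)`!%:R / k`!%:R) * (n + k)`!%:R
                        * (2%:R * gamma * omega) ^+ (2 * (n - k)))).
Proof.
move=> _ gamma_real omega_real.
rewrite /budakG !besselB_bessel_poly !horner0_bessel_poly !bessel_norm_poly_sum.
have -> : 2%:R * (gamma - 1) * ('i * omega) = 'i * (2%:R * (gamma - 1) * omega) by ring.
have -> : 2%:R * gamma * ('i * omega) = 'i * (2%:R * gamma * omega) by ring.
rewrite normrM !normf_div !normr_nat exprMn !expr_div_n.
rewrite !normCK_bessel_poly ?rpredM ?rpredB ?rpred1 ?realn //.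
set Qn := (bessel_norm_poly n).[_].
have [->|Qn_neq0] := eqVneq Qn 0; first by rewrite !(mulr0, invr0).
by field; rewrite Qn_neq0 /=; natr_neq0.
Qed.
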